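(* Let $q$ be a prime power, let $p\ge2$ be an integer, and let $Z$ be a random vector in $\mathbb{F}_q^n$ with distribution $P_Z$. For $0\le d\le p$ define $$g(d)=\frac{1}{q^n}\sum_{x\in\mathbb{F}_q^n}\ \sum_{\substack{(v_1,\dots,v_p)\in(\mathbb{F}_q^n)^p\\ \mathrm{rank}[v_1,\dots,v_p]=d}}\ \prod_{l=1}^pP_Z(x-v_l).$$ Then for every $0\le d\le p$, $$g(d)\le\binom{p}{d}q^{(p-d)(d-H_p(Z))}.$$
   Context: The inner sum is over ordered $p$-tuples whose span has dimension exactly $d$ ($[v_1,\dots,v_p]$ is the $n\times p$ matrix with columns $v_i$). $H_p(Z)=\frac{1}{1-p}\log_q\sum_xP_Z(x)^p$. *)

From HB Require Import structures.
From mathcomp Require Import all_boot all_order all_algebra all_field.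
From mathcomp Require Import all_classical all_reals all_analysis.
Unset Printing Implicit Defensive.
Import Order.TTheory GRing.Theory Num.Theory.
Local Open Scope ring_scope.

Definition renyiH (R : realType) (F : finFieldType) (n p : nat)
  (P : {ffun 'cV[F]_n -> R}) : R :=
  (1 - p%:R)^-1 * (ln (\sum_x P x ^+ p) / ln (#|F|%:R)).

Definition gfun (R : realType) (F : finFieldType) (n p : nat)
  (P : {ffun 'cV[F]_n -> R}) (d : nat) : R :=
  (#|F|%:R ^+ n)^-1 *
  \sum_(x : 'cV[F]_n) \sum_(V : 'M[F]_(n, p) | \rank V == d)
     \prod_(l < p) P (x - col l V).

From HB Require Import structures.
From mathcomp Require Import all_boot all_order all_algebra all_field.
From mathcomp Require Import all_classical all_reals all_analysis.
From mathcomp Require Import ring zify.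
Import Order.TTheory GRing.Theory Num.Theory.
Local Open Scope ring_scope.

(* A rank-d matrix M in F^(n x p) factors as M = V B with V in F^(n x d) and B in
   pivoted form: for some d-subset I of the columns, the columns of B in I are the
   standard basis vectors in order, the other p - d columns b_l are arbitrary. There
   are C(p, d) q^(d (p - d)) such B, so g(d) is at most the sum over them of
     q^-n sum_x sum_V prod_(k < d) P(x - v_k) * prod_(l \notin I) P(x - V b_l).
   AM-GM over the free columns reduces this to terms with prod_(l \notin I) replaced
   by P(x - V b)^(p - d), and putting y_k = x - v_k turns x - V b into
   (1 - sum_k b_k) x + Y b. Summing over x then gives either the moment
   sum_z P(z)^(p - d) or, when the coefficient of x vanishes, q^n times a sum which
   one more AM-GM step bounds by sum_z P(z)^(p - d + 1). Both are controlled by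
   c = q^(-H_p(Z)), the (p - 1)-th root of sum_z P(z)^p: the normalised moments
   (sum_z P(z)^s)^(1/(s - 1)) increase with s and are at least q^-n. *)

Section Means.
Variable R : realFieldType.

Lemma AGM2_exprn {a b : R} (k l : nat) : 0 <= a -> 0 <= b -> (0 < k + l)%N ->
  a ^+ k * b ^+ l <= ((a *+ k + b *+ l) / (k + l)%:R) ^+ (k + l).
Proof.
move=> a0 b0 kl0.
pose E (i : 'I_(k + l)) := if (i < k)%N then a else b.
have E_ge0 i : 0 <= E i by rewrite /E; case: ifP.
have := (@leif_AGM _ _ predT E (fun i _ => E_ge0 i)).1.
rewrite cardT size_enum_ord !big_split_ord /= /E.
under eq_bigr => i _ do rewrite /= ltn_ord.
under [X in _ * X]eq_bigr => i _ do rewrite /= ltnNge leq_addr.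
under [X in (X + _) / _]eq_bigr => i _ do rewrite /= ltn_ord.
under [X in (_ + X) / _]eq_bigr => i _ do rewrite /= ltnNge leq_addr.
by rewrite !prodr_const !sumr_const !card_ord.
Qed.

Lemma exprn_le_mean (y : R) (k m : nat) : 0 <= y -> (k <= m)%N -> (0 < m)%N ->
  y ^+ k <= (y ^+ m *+ k + (m - k)%:R) / m%:R.
Proof.
move=> y0 km m0; rewrite -(ler_pXn2r m0) ?nnegrE ?exprn_ge0 //; last first.
  by rewrite divr_ge0 ?addr_ge0 ?mulrn_wge0 ?exprn_ge0.
have := AGM2_exprn k (m - k) (exprn_ge0 m y0) ler01.
by rewrite subnKC // expr1n mulr1 -!exprM mulnC; apply.
Qed.

Lemma mul_exprn_le_mean (a b : R) r : 0 <= a -> 0 <= b ->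
  a * b ^+ r <= (a ^+ r.+1 + b ^+ r.+1 *+ r) / r.+1%:R.
Proof.
move=> a0 b0; rewrite -(ler_pXn2r (ltn0Sn r)) ?nnegrE; last 2 first.
- by rewrite mulr_ge0 ?exprn_ge0.
- by rewrite divr_ge0 ?addr_ge0 ?mulrn_wge0 ?exprn_ge0.
have := AGM2_exprn 1 r (exprn_ge0 r.+1 a0) (exprn_ge0 r.+1 b0) (ltn0Sn r).
rewrite add1n mulr1n; apply: le_trans.
by rewrite exprMn expr1 -!exprM mulnC.
Qed.

Lemma prod_le_mean_exprn (I : finType) (A : {set I}) (X : I -> R) r :
  #|A| = r -> (0 < r)%N -> (forall i, 0 <= X i) ->
  \prod_(i in A) X i <= (\sum_(i in A) X i ^+ r) / r%:R.
Proof.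
move=> cA r0 X0; rewrite -(ler_pXn2r r0) ?nnegrE ?prodr_ge0 //; last first.
  by rewrite divr_ge0 ?sumr_ge0 // => i _; rewrite exprn_ge0.
have := (@leif_AGM _ _ A (fun i => X i ^+ r) (fun i _ => exprn_ge0 r (X0 i))).1.
by rewrite cA prodrXl.
Qed.

End Means.

Section Moments.
Context {R : realFieldType} {T : finType} {P : T -> R}.
Hypothesis P0 : forall x, 0 <= P x.
Hypothesis P1 : \sum_x P x = 1.

Lemma distr_card_gt0 : (0 < #|T|)%N.
Proof.
rewrite lt0n; apply/eqP => /card0_eq T0; move/eqP: P1.
by rewrite big_pred0 // eq_sym oner_eq0.
Qed.

(* Bernoulli's inequality [1 + m (y - 1) <= y ^ m], applied to [y = N P x]. *)
Lemma moment_ge_uniform m : 1 <= #|T|%:R ^+ m * \sum_x P x ^+ m.+1.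
Proof.
set N : R := #|T|%:R.
have N0 : 0 < N by rewrite ltr0n distr_card_gt0.
have bern x : N * P x *+ m.+1 <= (N * P x) ^+ m.+1 + m%:R.
  have := @exprn_le_mean _ (N * P x) 1 m.+1 (mulr_ge0 (ltW N0) (P0 x)) isT isT.
  by rewrite expr1 mulr1n subSS subn0 ler_pdivlMr ?ltr0Sn // mulr_natr.
have : \sum_x N * P x *+ m.+1 <= \sum_x ((N * P x) ^+ m.+1 + m%:R).
  by apply: ler_sum => x _; exact: bern.
have const_sum : \sum_(x : T) m%:R = N * m%:R by rewrite sumr_const mulr_natl.
rewrite sumrMnl -mulr_sumr P1 mulr1 big_split /= const_sum.
under eq_bigr => x _ do rewrite exprMn.
rewrite -mulr_sumr mulr_natr mulrSr addrC lerD2l exprS -mulrA.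
by rewrite -{1}[N]mulr1 ler_pM2l.
Qed.

(* With [k = s - 1]: [P x ^ s = c ^ k * P x * (P x / c) ^ k], and by
   [exprn_le_mean] the power [(P x / c) ^ k] is at most the mean of [k] copies of
   [(P x / c) ^ m] and [m - k] ones; summing against [P x] uses
   [\sum_x P x ^ m.+1 = c ^ m]. *)
Lemma moment_le_root m c s : (0 < m)%N -> 0 < c -> c ^+ m = \sum_x P x ^+ m.+1 ->
  (0 < s)%N -> (s <= m.+1)%N -> \sum_x P x ^+ s <= c ^+ s.-1.
Proof.
move=> m0 c0 cS s0 sm; set k := s.-1.
have ks : s = k.+1 by rewrite /k prednK.
have km : (k <= m)%N by rewrite -ltnS -ks.
have cn0 : c != 0 by rewrite gt_eqF.
have mn0 : m%:R != 0 :> R by rewrite pnatr_eq0 -lt0n.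
have term_le x : P x ^+ s <=
    c ^+ k * ((P x ^+ m.+1 / c ^+ m) *+ k + P x * (m - k)%:R) / m%:R.
  have -> : P x ^+ s = c ^+ k * (P x * (P x / c) ^+ k).
    by rewrite ks exprS expr_div_n; field; exact: expf_neq0.
  have -> : c ^+ k * ((P x ^+ m.+1 / c ^+ m) *+ k + P x * (m - k)%:R) / m%:R
      = c ^+ k * (P x * (((P x / c) ^+ m *+ k + (m - k)%:R) / m%:R)).
    by rewrite !expr_div_n exprS; field; rewrite expf_neq0 ?mn0.
  apply: ler_wpM2l; first by rewrite exprn_ge0 // ltW.
  apply: ler_wpM2l => //; apply: exprn_le_mean => //.
  by rewrite divr_ge0 // ltW.
apply: le_trans; first by apply: ler_sum => x _; exact: term_le.
rewrite /= -mulr_suml -mulr_sumr big_split /= sumrMnl -mulr_suml -mulr_suml P1.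
rewrite -cS divff ?expf_neq0 // mul1r -natrD subnKC // -mulrA divff ?mulr1 //.
Qed.
End Moments.

Lemma sum_mx_prod_col {R : comNzSemiRingType} {F : finType} {n d}
    (G : 'I_d -> 'cV[F]_n -> R) :
  \sum_(Y : 'M[F]_(n, d)) \prod_k G k (col k Y) = \prod_k \sum_y G k y.
Proof.
rewrite bigA_distr_bigA /=.
pose cols (Y : 'M[F]_(n, d)) : {ffun 'I_d -> 'cV[F]_n} := [ffun k => col k Y].
pose of_cols (f : {ffun 'I_d -> 'cV[F]_n}) : 'M[F]_(n, d) := \matrix_(i, k) f k i 0.
have colsK : cancel cols of_cols.
  by move=> Y; apply/matrixP => i k; rewrite !mxE ffunE mxE.
have of_colsK : cancel of_cols cols.
  by move=> f; apply/ffunP => k; apply/matrixP => i j; rewrite ffunE !mxE ord1.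
rewrite (reindex cols); last by exists of_cols => ? _.
by apply: eq_bigr => Y _; apply: eq_bigr => k _; rewrite ffunE.
Qed.

Section ColumnSubstitution.
Context {F : fieldType} {n d : nat} {k0 : 'I_d} {b : 'cV[F]_d}.

Definition subst_col (Y : 'M[F]_(n, d)) : 'M[F]_(n, d) :=
  \matrix_(i, k) if k == k0 then (Y *m b) i 0 else Y i k.

Lemma col_subst_col Y k :
  col k (subst_col Y) = if k == k0 then Y *m b else col k Y.
Proof. by apply/matrixP => i j; rewrite !mxE ord1; case: eqP => // _; rewrite !mxE. Qed.

Lemma subst_col_inj : b k0 0 != 0 -> injective subst_col.
Proof.
move=> bk0 Y1 Y2 eqY.
have eq_col k : k != k0 -> col k Y1 = col k Y2.
  by move=> /negPf kk0; move: (congr1 (col k) eqY); rewrite !col_subst_col kk0.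
have eq_mul : Y1 *m b = Y2 *m b.
  by move: (congr1 (col k0) eqY); rewrite !col_subst_col eqxx.
have eq_entry i k : k != k0 -> Y1 i k = Y2 i k.
  by move=> kk0; have /matrixP/(_ i 0) := eq_col k kk0; rewrite !mxE.
apply/matrixP => i k; have [->|] := eqVneq k k0; last exact: eq_entry.
move/matrixP/(_ i 0): eq_mul; rewrite !mxE (bigD1 k0) //= [in RHS](bigD1 k0) //=.
rewrite (eq_bigr (fun j => Y2 i j * b j 0)) => [/addIr/(mulIf bk0)//|j jk0].
by rewrite eq_entry.
Qed.

End ColumnSubstitution.

Arguments subst_col {F n d} k0 b Y.

Section TranslatedColumns.
Variables (R : realFieldType) (F : finFieldType) (n d : nat) (P : 'cV[F]_n -> R).
Hypothesis P0 : forall x, 0 <= P x.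
Hypothesis P1 : \sum_x P x = 1.
Let N : R := #|{: 'cV[F]_n}|%:R.

Definition repeat_col (x : 'cV[F]_n) : 'M[F]_(n, d) := \matrix_(i, k) x i 0.

Lemma repeat_colM x (b : 'cV[F]_d) : repeat_col x *m b = (\sum_k b k 0) *: x.
Proof.
apply/matrixP => i j; rewrite !mxE ord1 mulr_suml; apply: eq_bigr => k _.
by rewrite !mxE mulrC.
Qed.

Lemma sum_prod_col_distr : \sum_(Y : 'M[F]_(n, d)) \prod_k P (col k Y) = 1.
Proof.
rewrite (sum_mx_prod_col (fun _ => P)); under eq_bigr => k _ do rewrite P1.
by rewrite prodr_const expr1n.
Qed.

Lemma sum_translate_cols x (b : 'cV[F]_d) (G : 'cV[F]_n -> R) :
  \sum_(V : 'M[F]_(n, d)) (\prod_k P (x - col k V)) * G (x - V *m b)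
  = \sum_(Y : 'M[F]_(n, d)) (\prod_k P (col k Y)) * G ((1 - \sum_k b k 0) *: x + Y *m b).
Proof.
have inj : injective (fun Y : 'M[F]_(n, d) => repeat_col x - Y).
  by move=> Y1 Y2 /addrI/oppr_inj.
rewrite (reindex_inj inj) /=; apply: eq_bigr => Y _; congr (_ * G _).
  apply: eq_bigr => k _; congr P; apply/matrixP => i j.
  by rewrite !mxE ord1 opprB addrC subrK.
by rewrite mulmxBl repeat_colM opprB scalerBl scale1r addrA addrAC.
Qed.

Lemma sum_prod_col_translate x : \sum_(V : 'M[F]_(n, d)) \prod_k P (x - col k V) = 1.
Proof.
have := sum_translate_cols x 0 (fun _ => 1).
under eq_bigr do rewrite mulr1; under [RHS]eq_bigr do rewrite mulr1.
by rewrite sum_prod_col_distr.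
Qed.

Lemma sum_moment_affine (a : F) (b : 'cV[F]_d) r : a != 0 ->
  \sum_x \sum_(Y : 'M[F]_(n, d)) (\prod_k P (col k Y)) * P (a *: x + Y *m b) ^+ r
  = \sum_z P z ^+ r.
Proof.
move=> a0; rewrite exchange_big /=.
have shift Y : \sum_x P (a *: x + Y *m b) ^+ r = \sum_z P z ^+ r.
  have inj : injective (fun x => a *: x + Y *m b) by move=> x1 x2 /addIr/(scalerI a0).
  by rewrite [RHS](reindex_inj inj).
under eq_bigr => Y _ do rewrite -mulr_sumr shift.
by rewrite -mulr_suml sum_prod_col_distr mul1r.
Qed.

Lemma sum_prod_col_exprn (k0 : 'I_d) s :
  \sum_(Y : 'M[F]_(n, d)) (\prod_(k | k != k0) P (col k Y)) * P (col k0 Y) ^+ s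
  = \sum_z P z ^+ s.
Proof.
pose G k := if k == k0 then fun y => P y ^+ s else P.
have Gk0 : G k0 = fun y => P y ^+ s by rewrite /G eqxx.
have Gk k : k != k0 -> G k = P by move/negPf=> kk0; rewrite /G kk0.
have := sum_mx_prod_col G; rewrite [RHS](bigD1 k0) //= Gk0.
rewrite [X in _ = _ * X]big1 ?mulr1 => [<-|k /Gk-> //].
apply: eq_bigr => Y _; rewrite [RHS](bigD1 k0) //= Gk0 mulrC.
by congr (_ * _); apply: eq_bigr => k /Gk->.
Qed.

(* AM-GM trades [P (col k0 Y) * P (Y b) ^ r] for [r + 1]-st powers; substituting
   [Y b] for the [k0]-th column shows both resulting sums are the same moment. *)
Lemma sum_moment_mul_le (b : 'cV[F]_d) k0 r : b k0 0 != 0 ->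
  \sum_(Y : 'M[F]_(n, d)) (\prod_k P (col k Y)) * P (Y *m b) ^+ r
  <= \sum_z P z ^+ r.+1.
Proof.
move=> bk0.
set m1 := \sum_z P z ^+ r.+1.
have subst_sum : \sum_(Y : 'M[F]_(n, d))
    (\prod_(k | k != k0) P (col k Y)) * P (Y *m b) ^+ r.+1 = m1.
  rewrite /m1 -(sum_prod_col_exprn k0 r.+1) [RHS](reindex_inj (subst_col_inj bk0)).
  apply: eq_bigr => Y _; rewrite col_subst_col eqxx; congr (_ * _).
  by apply: eq_bigr => k /negPf kk0; rewrite col_subst_col kk0.
apply: (@le_trans _ _ (\sum_(Y : 'M[F]_(n, d)) (\prod_(k | k != k0) P (col k Y)) *
   ((P (col k0 Y) ^+ r.+1 + P (Y *m b) ^+ r.+1 *+ r) / r.+1%:R))).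
  apply: ler_sum => Y _; rewrite (bigD1 k0) //= [P (col k0 Y) * _]mulrC -mulrA.
  apply: ler_wpM2l; first by rewrite prodr_ge0.
  exact: mul_exprn_le_mean.
under eq_bigr do rewrite mulrA mulrDr mulrnAr.
rewrite -mulr_suml big_split /= sumrMnl sum_prod_col_exprn subst_sum -mulrS.
by rewrite -[X in X / _]mulr_natr mulfK ?pnatr_eq0.
Qed.

(* After [Y = x - V], the coefficient of [x] is [1 - \sum_k b k 0]: if it is a unit
   the sum over [x] is a moment, otherwise it is constant in [x]. *)
Lemma mean_moment_translate_le (b : 'cV[F]_d) r c :
  (0 < r)%N -> N^-1 <= c ->
  (forall s, (0 < s <= d + r)%N -> \sum_z P z ^+ s <= c ^+ s.-1) ->
  N^-1 * \sum_x \sum_(V : 'M[F]_(n, d)) (\prod_k P (x - col k V)) * P (x - V *m b) ^+ r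
  <= c ^+ r.
Proof.
move=> r0 Nc moment_le.
have N0 : 0 < N by rewrite ltr0n (distr_card_gt0 P1).
under eq_bigr => x _ do rewrite (sum_translate_cols x b (fun y => P y ^+ r)).
have [a0|a0] := eqVneq (1 - \sum_k b k 0) 0; last first.
  rewrite sum_moment_affine // -[in c ^+ r](prednK r0) exprS.
  apply: ler_pM => //; first by rewrite invr_ge0 ltW.
    by rewrite sumr_ge0 // => z _; rewrite exprn_ge0.
  by apply: moment_le; rewrite r0 leq_addl.
have [k0 bk0] : exists k0, b k0 0 != 0.
  apply/cV0Pn/eqP => b0; move/eqP: a0.
  by rewrite b0 big1 ?subr0 ?oner_eq0 // => k _; rewrite mxE.
rewrite a0; under eq_bigr do under eq_bigr do rewrite scale0r add0r.
rewrite sumr_const -mulr_natl mulKf ?gt_eqF //.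
apply: le_trans (sum_moment_mul_le _ _ _ bk0) (moment_le _ _).
by have := ltn_ord k0; lia.
Qed.

End TranslatedColumns.

Section PivotedFactorization.
Context {F : fieldType} {n p d : nat}.

Definition unit_cV (k : nat) : 'cV[F]_d := \col_i ((i : nat) == k)%:R.

Lemma mul_unit_cV (V : 'M[F]_(n, d)) (k : 'I_d) : V *m unit_cV k = col k V.
Proof.
by rewrite colE; congr (_ *m _); apply/matrixP => i j; rewrite !mxE ord1 eqxx andbT.
Qed.

(* A pair [(I, b)] with [#|I| = d] and [b \in pivoted I] encodes the d x p matrix
   whose columns are [b]: the [k]-th column indexed by [I] is the [k]-th standard
   basis vector, the others are arbitrary. *)
Definition pivoted (I : {set 'I_p}) : pred {ffun 'I_p -> 'cV[F]_d} :=
  family (fun l => if l \in I then pred1 (unit_cV (index l (enum I))) else predT).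

Definition mul_cols (V : 'M[F]_(n, d)) (b : {ffun 'I_p -> 'cV[F]_d}) : 'M[F]_(n, p) :=
  \matrix_(i, l) (V *m b l) i 0.

Lemma col_mul_cols V b l : col l (mul_cols V b) = V *m b l.
Proof. by apply/matrixP => i j; rewrite !mxE ord1. Qed.

Lemma rank_pivoted_factor (l0 : 'I_p) (M : 'M[F]_(n, p)) : \rank M = d ->
  exists I : {set 'I_p}, exists b, exists V : 'M[F]_(n, d),
    [/\ #|I| = d, b \in pivoted I & mul_cols V b = M].
Proof.
move=> rM; set A := M^T; set f := maxrankfun A.
set I := [set f k | k : 'I_(\rank A)].
have cardI : #|I| = d by rewrite card_imset ?card_ord ?mxrank_tr //; exact: maxrankfun_inj.
pose h (k : 'I_d) : 'I_p := nth l0 (enum I) k.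
set W := rowsub h A.
have index_lt l : l \in I -> (index l (enum I) < d)%N.
  by move=> lI; rewrite -cardI cardE index_mem mem_enum.
have h_index l (lI : l \in I) : h (Ordinal (index_lt l lI)) = l.
  by rewrite /h /= nth_index // mem_enum.
have AW : (A <= W)%MS.
  apply: (submx_trans (_ : A <= rowsub f A)%MS); first by rewrite eq_maxrowsub.
  apply/row_subP => k; rewrite row_rowsub.
  have fI : f k \in I by apply/imsetP; exists k.
  by rewrite -(h_index _ fI) -(row_rowsub h A) row_sub.
pose b := [ffun l => if l \in I then unit_cV (index l (enum I))
                    else (row l A *m pinvmx W)^T].
exists I, b, W^T; split => //.
  by apply/familyP => l; rewrite ffunE; case: ifP => //= _; exact: eqxx.
apply/matrixP => i l; rewrite mxE.
suff -> : W^T *m b l = col l M by rewrite mxE.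
rewrite ffunE; case: ifP => lI.
  rewrite (mul_unit_cV _ (Ordinal (index_lt l lI))).
  by apply/matrixP => i' j; rewrite !mxE h_index.
rewrite -trmx_mul mulmxKpV; last exact: submx_trans (row_sub l A) AW.
by rewrite /A -tr_col trmxK.
Qed.

End PivotedFactorization.

Arguments unit_cV : clear implicits.
Arguments pivoted : clear implicits.
Arguments mul_cols : clear implicits.

Lemma card_pivoted (F : finFieldType) p d (I : {set 'I_p}) : #|I| = d ->
  #|pivoted F p d I| = (#|F| ^ (d * (p - d)))%N.
Proof.
move=> cardI; rewrite card_family foldrE big_map big_enum /= (bigID (mem I)) /=.
rewrite big1 ?mul1n => [|l ->]; last by rewrite card1.
rewrite (eq_bigr (fun _ => #|{: 'cV[F]_d}|)) => [|l /negPf ->]; last by rewrite cardT.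
rewrite prod_nat_const card_mx muln1 -expnM; congr (_ ^ (_ * _))%N.
have := cardsC I; rewrite cardI card_ord => cardIC.
by rewrite -[X in (X - _)%N]cardIC addKn; apply: eq_card => l; rewrite !inE.
Qed.

Lemma prod_pivoted {F : fieldType} {R : comPzSemiRingType} {p d} {I : {set 'I_p}}
    {b : {ffun 'I_p -> 'cV[F]_d}} (f : 'cV[F]_d -> R) (l0 : 'I_p) :
  #|I| = d -> b \in pivoted F p d I ->
  \prod_(l < p) f (b l) = (\prod_(k < d) f (unit_cV F d k)) * \prod_(l in ~: I) f (b l).
Proof.
move=> cardI /familyP bI; rewrite (bigID (mem I)) /=; congr (_ * _); last first.
  by apply: eq_bigl => l; rewrite inE.
rewrite -big_enum (big_nth l0) -cardE cardI big_mkord; apply: eq_bigr => k _.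
have kI : nth l0 (enum I) k \in I by rewrite -mem_enum mem_nth // -cardE cardI.
move: (bI (nth l0 (enum I) k)); rewrite kI => /eqP->.
by rewrite index_uniq ?enum_uniq // -cardE cardI.
Qed.

Lemma ler_sum_cover {R : numDomainType} {X Y : finType} (phi : X -> Y) (D : pred X)
    (Q : pred Y) (f : Y -> R) : (forall y, 0 <= f y) ->
  (forall y, Q y -> exists2 x, D x & phi x = y) ->
  \sum_(y | Q y) f y <= \sum_(x | D x) f (phi x).
Proof.
move=> f0 cover; rewrite (partition_big phi predT) //= [X in _ <= X](bigID Q) /=.
rewrite -[X in X <= _]addr0; apply: lerD; last by do 2!apply: sumr_ge0 => ? _.
apply: ler_sum => y Qy; have [x Dx <-] := cover y Qy.
rewrite (bigD1 x) /=; last by rewrite Dx eqxx.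
by rewrite lerDl sumr_ge0.
Qed.

Section PivotedSum.
Context {R : realFieldType} {F : finFieldType} {n p d : nat} {P : 'cV[F]_n -> R} {c : R}.
Hypothesis P0 : forall x, 0 <= P x.
Hypothesis P1 : \sum_x P x = 1.
Let N : R := #|{: 'cV[F]_n}|%:R.
Hypothesis inv_card_le : N^-1 <= c.
Hypothesis moment_le : forall s, (0 < s <= p)%N -> \sum_z P z ^+ s <= c ^+ s.-1.

Lemma mean_prod_pivoted_le (I : {set 'I_p}) b (l0 : 'I_p) :
  (d <= p)%N -> #|I| = d -> b \in pivoted F p d I ->
  N^-1 * \sum_x \sum_(V : 'M[F]_(n, d)) \prod_(l < p) P (x - V *m b l) <= c ^+ (p - d).
Proof.
move=> dp cardI bI.
have N0 : 0 < N by rewrite ltr0n (distr_card_gt0 P1).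
have cardIC : #|~: I| = (p - d)%N.
  by have := cardsC I; rewrite cardI card_ord; lia.
have split_prod x V : \prod_(l < p) P (x - V *m b l)
    = (\prod_k P (x - col k V)) * \prod_(l in ~: I) P (x - V *m b l).
  rewrite (prod_pivoted (fun y => P (x - V *m y)) l0 cardI bI) /=.
  by congr (_ * _); apply: eq_bigr => k _; rewrite mul_unit_cV.
under eq_bigr => x _ do under eq_bigr => V _ do rewrite split_prod.
have [pd0|r0] := posnP (p - d).
  rewrite pd0 expr0; have IC0 : ~: I =i pred0 by apply: card0_eq; rewrite cardIC pd0.
  under eq_bigr => x _ do under eq_bigr => V _ do rewrite (big_pred0 _ _ _ _ IC0) mulr1.
  under eq_bigr => x _ do rewrite sum_prod_col_translate //.
  by rewrite sumr_const -/N mulVf ?gt_eqF.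
set r := (p - d)%N.
apply: (@le_trans _ _ (N^-1 * \sum_x \sum_(V : 'M[F]_(n, d)) (\prod_k P (x - col k V)) *
   ((\sum_(l in ~: I) P (x - V *m b l) ^+ r) / r%:R))).
  apply: ler_wpM2l; first by rewrite invr_ge0 ltW.
  do 2!apply: ler_sum => ? _; apply: ler_wpM2l; first by rewrite prodr_ge0.
  exact: prod_le_mean_exprn.
under eq_bigr => x _ do under eq_bigr => V _ do rewrite mulrA mulr_sumr.
under eq_bigr => x _ do rewrite -mulr_suml exchange_big /=.
rewrite -mulr_suml exchange_big /= mulrA mulr_sumr.
apply: (@le_trans _ _ ((\sum_(l in ~: I) c ^+ r) / r%:R)); last first.
  by rewrite sumr_const cardIC -/r -[c ^+ r *+ r]mulr_natr mulfK // pnatr_eq0 -lt0n.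
apply: ler_wpM2r; first by rewrite invr_ge0 ler0n.
apply: ler_sum => l _; apply: mean_moment_translate_le => //.
by rewrite subnKC.
Qed.

End PivotedSum.

Section RenyiRoot.
Context {R : realType} {F : finFieldType} {n p : nat} {P : {ffun 'cV[F]_n -> R}}.
Hypothesis p_gt1 : (1 < p)%N.
Hypothesis P0 : forall x, 0 <= P x.
Hypothesis P1 : \sum_x P x = 1.
Let q : R := #|F|%:R.
Let N : R := #|{: 'cV[F]_n}|%:R.

Definition renyi_root : R := #|F|%:R `^ (- renyiH R F n p P).

Let q_gt1 : 1 < q. Proof. by rewrite ltr1n card_finNzRing_gt1. Qed.

Let N0 : 0 < N. Proof. by rewrite ltr0n (distr_card_gt0 P1). Qed.

Let pS : p.-1.+1 = p. Proof. by rewrite prednK // ltnW. Qed.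

Let N_moment_ge1 : 1 <= N ^+ p.-1 * \sum_x P x ^+ p.
Proof. by have := moment_ge_uniform P0 P1 p.-1; rewrite pS. Qed.

Lemma renyi_root_gt0 : 0 < renyi_root.
Proof. by apply: powR_gt0; rewrite (lt_trans ltr01 q_gt1). Qed.

Lemma renyi_root_exprn : renyi_root ^+ p.-1 = \sum_x P x ^+ p.
Proof.
have S0 : \sum_x P x ^+ p \in Num.pos.
  rewrite posrE lt_def sumr_ge0 ?andbT => [|x _]; last exact: exprn_ge0.
  by apply: contraTneq N_moment_ge1 => ->; rewrite mulr0 ler10.
have q0 : q != 0 by rewrite gt_eqF // (lt_trans ltr01 q_gt1).
have lnq0 : ln q != 0 by rewrite gt_eqF // ln_gt0.
have m0 : p.-1%:R != 0 :> R by rewrite pnatr_eq0 -lt0n -ltnS pS.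
have pE : p%:R = p.-1%:R + 1 :> R by rewrite natr1 pS.
rewrite /renyi_root -powR_mulrn ?powR_ge0 // -powRrM /renyiH -/q pE.
rewrite /powR (negPf q0) -[in RHS](lnK S0); congr expR.
by field; rewrite lnq0 opprD addrCA subrr addr0 oppr_eq0.
Qed.

Lemma moment_le_renyi_root s : (0 < s <= p)%N -> \sum_z P z ^+ s <= renyi_root ^+ s.-1.
Proof.
case/andP=> s0 sp; apply: (moment_le_root P0 P1 p.-1) => //.
- by rewrite -ltnS pS.
- exact: renyi_root_gt0.
- by rewrite pS renyi_root_exprn.
- by rewrite pS.
Qed.

Lemma inv_card_le_renyi_root : N^-1 <= renyi_root.
Proof.
have N_root_ge1 : 1 <= N * renyi_root.
  have Nr0 : 0 <= N * renyi_root by rewrite mulr_ge0 ?ltW ?renyi_root_gt0.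
  by rewrite -(expr_ge1 (_ : (0 < p.-1)%N)) // ?exprMn ?renyi_root_exprn // -ltnS pS.
by rewrite -(ler_pM2l N0) mulfV ?gt_eqF.
Qed.

Lemma powR_renyi_split d : (d <= p)%N ->
  q `^ ((p - d)%N%:R * (d%:R - renyiH R F n p P))
  = q ^+ (d * (p - d)) * renyi_root ^+ (p - d).
Proof.
move=> dp; have q0 : 0 <= q by rewrite ler0n.
have qn0 : q != 0 by rewrite gt_eqF // (lt_trans ltr01 q_gt1).
rewrite mulrDr powRD ?qn0 ?implybT // -natrM mulnC powR_mulrn //.
by rewrite [_ * - _]mulrC powRrM powR_mulrn ?powR_ge0.
Qed.

End RenyiRoot.

Arguments renyi_root : clear implicits.

Lemma gfun_le_sum_pivoted {R : realType} {F : finFieldType} {n p} {P : {ffun 'cV[F]_n -> R}}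
    d (l0 : 'I_p) : (forall x, 0 <= P x) ->
  gfun R F n p P d <= \sum_(I : {set 'I_p} | #|I| == d) \sum_(b in pivoted F p d I)
    #|{: 'cV[F]_n}|%:R^-1 * \sum_x \sum_(V : 'M[F]_(n, d)) \prod_(l < p) P (x - V *m b l).
Proof.
move=> P0; set N : R := #|{: 'cV[F]_n}|%:R.
have cover x : \sum_(M : 'M[F]_(n, p) | \rank M == d) \prod_(l < p) P (x - col l M)
    <= \sum_(I : {set 'I_p} | #|I| == d) \sum_(b in pivoted F p d I)
         \sum_(V : 'M[F]_(n, d)) \prod_(l < p) P (x - V *m b l).
  pose factor (t : ({set 'I_p} * {ffun 'I_p -> 'cV[F]_d}) * 'M[F]_(n, d)) :=
    mul_cols F n p d t.2 t.1.2.
  apply: le_trans (ler_sum_cover factor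
    (fun t => (#|t.1.1| == d) && (t.1.2 \in pivoted F p d t.1.1) && true)
    (fun M => \rank M == d) (fun M => \prod_(l < p) P (x - col l M)) _ _) _.
  - by move=> M; rewrite prodr_ge0.
  - move=> M /eqP/(rank_pivoted_factor l0) [I [b [V [cardI bI <-]]]].
    by exists ((I, b), V); rewrite //= cardI eqxx bI.
  rewrite [X in _ <= X]pair_big_dep [X in _ <= X]pair_big_dep /=.
  by under eq_bigr => t _ do under eq_bigr => l _ do rewrite col_mul_cols.
rewrite /gfun (_ : #|F|%:R ^+ n = N); last by rewrite /N card_mx muln1 natrX.
apply: (@le_trans _ _ (N^-1 * \sum_x \sum_(I : {set 'I_p} | #|I| == d)
    \sum_(b in pivoted F p d I) \sum_(V : 'M[F]_(n, d)) \prod_(l < p) P (x - V *m b l))).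
  by apply: ler_wpM2l; [rewrite invr_ge0 ler0n | apply: ler_sum => x _; exact: cover].
rewrite exchange_big mulr_sumr; apply: ler_sum => I _.
by rewrite exchange_big mulr_sumr.
Qed.

Theorem mainTheorem13 (R : realType) (F : finFieldType) (n p : nat)
  (P : {ffun 'cV[F]_n -> R}) :
  (2 <= p)%N ->
  (forall x, 0 <= P x) -> \sum_x P x = 1 ->
  forall d : nat, (d <= p)%N ->
  gfun R F n p P d <=
    'C(p, d)%:R * (#|F|%:R `^ (((p - d)%N)%:R * (d%:R - renyiH R F n p P))).
Proof.
move=> p_gt1 P0 P1 d dp; pose l0 : 'I_p := Ordinal (ltnW p_gt1).
set c := renyi_root R F n p P.
apply: le_trans (gfun_le_sum_pivoted d l0 P0) _.
apply: (@le_trans _ _ (\sum_(I : {set 'I_p} | #|I| == d)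
    \sum_(b in pivoted F p d I) c ^+ (p - d))).
  apply: ler_sum => I /eqP cardI; apply: ler_sum => b bI.
  apply: (mean_prod_pivoted_le P0 P1 _ _ I b l0 dp cardI bI).
  - exact: inv_card_le_renyi_root.
  - exact: moment_le_renyi_root.
rewrite powR_renyi_split // -/c.
rewrite (eq_bigr (fun _ => #|F|%:R ^+ (d * (p - d)) * c ^+ (p - d))) => [|I /eqP cardI].
  have card_subsets : #|[pred I : {set 'I_p} | #|I| == d]| = 'C(p, d).
    by rewrite -[p in RHS]card_ord -card_draws; apply: eq_card => I; rewrite !inE.
  by rewrite sumr_const card_subsets mulr_natl.
by rewrite sumr_const card_pivoted // -natrX mulr_natl.
Qed.
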